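(* Let $T$ be an interval exchange map with admissible combinatorial data on an alphabet $\mathcal A$, having the Keane property, with total length $\lambda^*$. For every $k\ge0$, $$\max_{\alpha\in\mathcal A}\lambda^{(k)}_\alpha\ \ge\ \lambda^*\|Q(k)\|^{-1}\ \ge\ \min_{\alpha\in\mathcal A}\lambda^{(k)}_\alpha .$$ Moreover, $T$ satisfies condition (a) if and only if for every $\varepsilon>0$ there exists $C_\varepsilon>0$ such that for all $k\ge0$, $$\max_{\alpha\in\mathcal A}\lambda^{(k)}_\alpha\le C_\varepsilon\,\min_{\alpha\in\mathcal A}\lambda^{(k)}_\alpha\,\|Q(k)\|^\varepsilon .$$
   Context: Combinatorial data: bijections $\pi_0,\pi_1:\mathcal A\to\{1,\dots,d\}$ ($d=\#\mathcal A\ge2$), admissible if $\pi_0^{-1}(\{1,\dots,k\})\neq\pi_1^{-1}(\{1,\dots,k\})$ for $1\le k<d$. For $\lambda\in(0,\infty)^{\mathcal A}$: $\lambda^*=\sum\lambda_\alpha$, $I=[0,\lambda^* )$, $I_\alpha=[0,\lambda_\alpha)\times\{\alpha\}$, $j_\varepsilon(x,\alpha)=x+\sum_{\pi_\varepsilon(\beta)<\pi_\varepsilon(\alpha)}\lambda_\beta$, $T=j_1\circ j_0^{-1}$. Keane property: no $(\alpha,\beta,m)$ with $\pi_0(\beta)>1$, $m\ge1$, $T^m(j_0(0,\alpha))=j_0(0,\beta)$. Rauzy–Veech step: with $\pi_0(\alpha_0)=\pi_1(\alpha_1)=d$ and $\lambda_{\alpha_\varepsilon}>\lambda_{\alpha_{1-\varepsilon}}$,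 pass to the first return map to $[0,\lambda^*-\lambda_{\alpha_{1-\varepsilon}})$, the i.e.m. with $\hat\lambda_{\alpha_\varepsilon}=\lambda_{\alpha_\varepsilon}-\lambda_{\alpha_{1-\varepsilon}}$, other lengths unchanged, $\hat\pi_\varepsilon=\pi_\varepsilon$, $\hat\pi_{1-\varepsilon}(\alpha)=\pi_{1-\varepsilon}(\alpha)$ if $\pi_{1-\varepsilon}(\alpha)\le\pi_{1-\varepsilon}(\alpha_\varepsilon)$, $\pi_{1-\varepsilon}(\alpha)+1$ if $\pi_{1-\varepsilon}(\alpha_\varepsilon)<\pi_{1-\varepsilon}(\alpha)<d$, $\pi_{1-\varepsilon}(\alpha_\varepsilon)+1$ if $\pi_{1-\varepsilon}(\alpha)=d$; name $\alpha_\varepsilon$; matrix $V=\mathbf I+E_{\alpha_\varepsilon\alpha_{1-\varepsilon}}$ with $\lambda=V\hat\lambda$. Iterating gives lengths $\lambda^{[n]}$ and matrices $V^{[n]}$; every letter is the name of infinitely many steps. Accelerated algorithm: $n(0)=0$, $n(k+1)$ the largest integer such that steps $n(k)<n\le n(k+1)$ have at most $d-1$ distinct names; $Z(k)=V^{[n(k-1)+1]}\cdots V^{[n(k)]}$, $Q(k)=Z(1)\cdots Z(k)$ ($Q(0)=\mathbf I$), $\lambda^{(k)}=\lambda^{[n(k)]}$ (so $\lambda=Q(k)\lambda^{(k)}$). $\|M\|$ is the sum of the absolute values of the entries of $M$. Condition (a): for every $\varepsilon>0$ there is $C_\varepsilon>0$ with $\|Z(k+1)\|\le C_\varepsilon\|Q(k)\|^\varepsilon$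 for all $k\ge0$. *)

From HB Require Import structures.
From mathcomp Require Import all_boot all_order all_algebra.
From mathcomp Require Import boolp reals exp.
Set Implicit Arguments. Unset Strict Implicit. Unset Printing Implicit Defensive.
Import Order.TTheory GRing.Theory Num.Theory.
Local Open Scope ring_scope.

Section IEM.
Variables (R : realType) (A : finType).

Definition is_bij_onto (p : A -> nat) : Prop :=
  injective p /\ (forall a, (1 <= p a <= #|A|)%N) /\
  (forall i, (1 <= i <= #|A|)%N -> exists a, p a = i).

Definition admissible (p0 p1 : A -> nat) : Prop :=
  forall k, (1 <= k < #|A|)%N -> [set a | (p0 a <= k)%N] != [set a | (p1 a <= k)%N].

(** j_eps(0,alpha) : left endpoint of the subinterval of alpha *)
Definition startp (lam : A -> R) (p : A -> nat) (a : A) : R :=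
  \sum_(b : A | (p b < p a)%N) lam b.

Definition total_length (lam : A -> R) : R := \sum_a lam a.

(** T = j1 o j0^{-1} on I = [0, total length) (identity off I, irrelevant) *)
Definition iem (p0 p1 : A -> nat) (lam : A -> R) (x : R) : R :=
  match [pick a | (startp lam p0 a <= x) && (x < startp lam p0 a + lam a)] with
  | Some a => x - startp lam p0 a + startp lam p1 a
  | None => x
  end.

Definition keane (p0 p1 : A -> nat) (lam : A -> R) : Prop :=
  forall (a b : A) (m : nat), (1 < p0 b)%N -> (1 <= m)%N ->
    iter m (iem p0 p1 lam) (startp lam p0 a) <> startp lam p0 b.

Record rvdata := RVData { rv_p0 : A -> nat; rv_p1 : A -> nat; rv_len : A -> R }.

Definition last_letter (p : A -> nat) : option A := [pick a | p a == #|A|].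

(* new permutation pi_{1-eps}, with k = pi_{1-eps}(alpha_eps) *)
Definition rv_perm (p : A -> nat) (k : nat) : A -> nat :=
  fun a => if (p a <= k)%N then p a else if (p a < #|A|)%N then (p a).+1 else k.+1.

Definition rv_newlen (len : A -> R) (w l : A) : A -> R :=
  fun a => if a == w then len w - len l else len a.

(** one step: new data, and (name = winner alpha_eps, loser alpha_{1-eps});
    None (data unchanged) only if the step is undefined (tie), which
    never happens under the Keane property. *)
Definition rv_step (D : rvdata) : rvdata * option (A * A) :=
  let: RVData p0 p1 len := D in
  match last_letter p0, last_letter p1 with
  | Some a0, Some a1 =>
      if len a1 < len a0 then
        (RVData p0 (rv_perm p1 (p1 a0)) (rv_newlen len a0 a1), Some (a0, a1))
      else if len a0 < len a1 then
        (RVData (rv_perm p0 (p0 a1)) p1 (rv_newlen len a1 a0), Some (a1, a0))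
      else (D, None)
  | _, _ => (D, None)
  end.

Variables (p0 p1 : A -> nat) (lam : A -> R).

Definition rv_state (n : nat) : rvdata := iter n (fun D => (rv_step D).1) (RVData p0 p1 lam).

Definition rv_lambda (n : nat) : A -> R := rv_len (rv_state n).

(* (winner, loser) of step n (n >= 1) *)
Definition rv_wl (n : nat) : option (A * A) := (rv_step (rv_state n.-1)).2.

Definition rv_name (n : nat) : option A := omap fst (rv_wl n).

Definition mx := A -> A -> nat.
Definition mx1 : mx := fun a b => nat_of_bool (a == b).
Definition mxmul (M N : mx) : mx := fun a c => (\sum_b M a b * N b c)%N.
Definition mxprod (s : seq mx) : mx := foldr mxmul mx1 s.
(* ||M|| = sum of absolute values of entries (entries are nonnegative) *)
Definition mxnorm (M : mx) : nat := (\sum_a \sum_b M a b)%N.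

Definition rv_V (n : nat) : mx :=
  fun a b => (mx1 a b + nat_of_bool (rv_wl n == Some (a, b)))%N.

Definition ndist (lo m : nat) : nat :=
  size (undup [seq rv_name n | n <- iota lo.+1 (m - lo)]).

Definition accel_pred (lo : nat) : pred nat :=
  fun m => (lo <= m)%N && (ndist lo m <= #|A| - 1)%N.

Lemma accel_pred_lo lo : exists m, accel_pred lo m.
Proof. by exists lo; rewrite /accel_pred /ndist leqnn subnn. Qed.

(* n(k+1) = the largest m such that steps lo < n <= m have at most d-1 names
   (such a largest m exists since every letter names infinitely many steps;
   otherwise a junk value is returned) *)
Definition accel_next (lo : nat) : nat :=
  match pselect (exists ub, forall m, accel_pred lo m -> (m <= ub)%N) with
  | left h => let: exist ub hub := cid h in ex_maxn (accel_pred_lo lo) hub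
  | right _ => lo
  end.

Fixpoint accel_n (k : nat) : nat :=
  match k with 0 => 0%N | k'.+1 => accel_next (accel_n k') end.

Definition accel_Z (k : nat) : mx :=
  mxprod [seq rv_V n | n <- iota (accel_n k.-1).+1 (accel_n k - accel_n k.-1)].

Definition accel_Q (k : nat) : mx := mxprod [seq accel_Z i | i <- iota 1 k].

Definition accel_lambda (k : nat) : A -> R := rv_lambda (accel_n k).

Definition condition_a : Prop :=
  forall eps : R, 0 < eps -> exists C : R, 0 < C /\
    forall k, ((mxnorm (accel_Z k.+1))%:R : R) <= C * ((mxnorm (accel_Q k))%:R `^ eps).

End IEM.

Definition some_val (R : realType) (A : finType) (f : A -> R) : R :=
  if [pick a : A] is Some a then f a else 0.
Definition alph_max (R : realType) (A : finType) (f : A -> R) : R :=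
  \big[Order.max/some_val f]_(a : A) f a.
Definition alph_min (R : realType) (A : finType) (f : A -> R) : R :=
  \big[Order.min/some_val f]_(a : A) f a.

From HB Require Import structures.
From mathcomp Require Import all_boot all_order all_algebra.
From mathcomp Require Import boolp reals exp.
From mathcomp Require Import zify lra ring.
Import Order.TTheory GRing.Theory Num.Theory.
Local Open Scope ring_scope.
Set Implicit Arguments. Unset Strict Implicit. Unset Printing Implicit Defensive.

(* Since [lam = Q(k) lam^(k)] with [Q(k)] a nonnegative integer matrix, the
   total length lies between [||Q(k)|| min lam^(k)] and [||Q(k)|| max lam^(k)].
   Two comparisons link consecutive accelerated steps: some letter names no
   step of a block, so [min lam^(k) <= max lam^(k+1)]; and [lam^(k) =
   Z(k+1) lam^(k+1)] gives [||Z(k+1)|| min lam^(k+1) <= d max lam^(k)].  With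
   the balance estimate at exponent [delta] these yield [||Z(k+1)|| <=
   K ||Q(k)||^(2 delta) ||Z(k+1)||^delta], hence condition (a).  Conversely,
   condition (a) bounds the product of any fixed number of consecutive
   [||Z||] by [C ||Q(k)||^eps]; and within [4d] accelerated steps every letter
   enters the support of every row of the product of the [V]'s, so that
   [max lam^(k+4d) <= sum lam^(k+4d) <= min lam^(k)]. *)

Lemma sumr_gt0 (R : numDomainType) (I : finType) (i0 : I) (f : I -> R) :
  (forall i, 0 < f i) -> 0 < \sum_i f i.
Proof.
move=> f_gt0; rewrite (bigD1 i0) //= ltr_pwDl //.
by apply: sumr_ge0 => i _; exact: ltW.
Qed.

Lemma le_powR_of_le_mul_powR (R : realType) (z K d : R) :
  0 < z -> d < 1 -> z <= K * z `^ d -> z <= K `^ (1 - d)^-1.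
Proof.
move=> z_gt0 d_lt1 zK.
have zd_gt0 : 0 < z `^ d by rewrite powR_gt0.
have split_z : z = z `^ d * z `^ (1 - d).
  by rewrite -powRD subrKC ?powRr1 ?ltW // (gt_eqF z_gt0) implybT.
have le_K : z `^ (1 - d) <= K by rewrite -(ler_pM2l zd_gt0) -split_z mulrC.
have d1_gt0 : 0 < 1 - d by rewrite subr_gt0.
have -> : z = (z `^ (1 - d)) `^ (1 - d)^-1.
  by rewrite -powRrM mulfV ?gt_eqF // powRr1 ?ltW.
apply: ge0_ler_powR => //; rewrite ?nnegrE ?invr_ge0 ?powR_ge0 ?(ltW d1_gt0) //.
exact: le_trans (powR_ge0 _ _) le_K.
Qed.

Section AlphabetExtrema.
Variables (R : realType) (A : finType).

Lemma le_alph_max (f : A -> R) a : f a <= alph_max f.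
Proof. by rewrite /alph_max (bigD1 a) //= le_max lexx. Qed.

Lemma alph_min_le (f : A -> R) a : alph_min f <= f a.
Proof. by rewrite /alph_min (bigD1 a) //= ge_min lexx. Qed.

Lemma big_attained (T : Type) (op : T -> T -> T) (x0 : T) (f : A -> T) :
  (exists a, x0 = f a) -> (forall x y, op x y = x \/ op x y = y) ->
  exists a, \big[op/x0]_(b : A) f b = f a.
Proof.
move=> x0_val op_sel; apply: (big_ind (fun y => exists a, y = f a)) => //.
  by move=> _ _ [a ->] [b ->]; case: (op_sel (f a) (f b)) => ->; [exists a|exists b].
by move=> a _; exists a.
Qed.

Lemma some_val_attained (a0 : A) (f : A -> R) : exists a, some_val f = f a.
Proof. by rewrite /some_val; case: pickP => [a _|/(_ a0)//]; exists a. Qed.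

Lemma alph_max_attained (a0 : A) (f : A -> R) : exists a, alph_max f = f a.
Proof.
apply: big_attained; first exact: some_val_attained a0 f.
by move=> x y; case: leP; [right|left].
Qed.

Lemma alph_min_attained (a0 : A) (f : A -> R) : exists a, alph_min f = f a.
Proof.
apply: big_attained; first exact: some_val_attained a0 f.
by move=> x y; case: leP; [left|right].
Qed.

Lemma sum_le_card_alph_max (f : A -> R) : \sum_a f a <= #|A|%:R * alph_max f.
Proof.
apply: le_trans (_ : \sum_(a : A) alph_max f <= _).
  by apply: ler_sum => a _; exact: le_alph_max.
by rewrite sumr_const mulr_natl.
Qed.

End AlphabetExtrema.

Section NatMatrices.
Variable A : finType.

Lemma mxmul1l (M : mx A) : mxmul (@mx1 A) M = M.
Proof.
apply: funext => a; apply: funext => c.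
rewrite /mxmul (bigD1 a) //= /mx1 eqxx mul1n big1 ?addn0 //.
by move=> b ba; rewrite eq_sym (negbTE ba).
Qed.

Lemma mxmul1r (M : mx A) : mxmul M (@mx1 A) = M.
Proof.
apply: funext => a; apply: funext => c.
rewrite /mxmul (bigD1 c) //= /mx1 eqxx muln1 big1 ?addn0 //.
by move=> b bc; rewrite (negbTE bc) muln0.
Qed.

Lemma mxmulA (M N P : mx A) : mxmul M (mxmul N P) = mxmul (mxmul M N) P.
Proof.
apply: funext => a; apply: funext => c; rewrite /mxmul.
under eq_bigr do rewrite big_distrr.
rewrite exchange_big /=; apply: eq_bigr => e _; rewrite big_distrl /=.
by apply: eq_bigr => b _; rewrite mulnA.
Qed.

Lemma mxprod_cat (s t : seq (mx A)) : mxprod (s ++ t) = mxmul (mxprod s) (mxprod t).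
Proof. by elim: s => [|M s IH] /=; rewrite ?mxmul1l // IH mxmulA. Qed.

Lemma mxprod_rcons (s : seq (mx A)) M : mxprod (rcons s M) = mxmul (mxprod s) M.
Proof. by rewrite -cats1 mxprod_cat /= mxmul1r. Qed.

Lemma mxnormM (M N : mx A) : (mxnorm (mxmul M N) <= mxnorm M * mxnorm N)%N.
Proof.
rewrite /mxnorm /mxmul big_distrl /=; apply: leq_sum => a _.
rewrite big_distrl /= exchange_big /=; apply: leq_sum => b _.
rewrite -big_distrr /=; apply: leq_mul => //.
by rewrite [X in (_ <= X)%N](bigD1 b) //= leq_addr.
Qed.

End NatMatrices.

Section NatMatrixAction.
Variables (R : pzSemiRingType) (A : finType).

Definition mxapp (M : mx A) (v : A -> R) : A -> R :=
  fun a => \sum_b (M a b)%:R * v b.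

Lemma mxapp1 v : mxapp (@mx1 A) v = v.
Proof.
apply: funext => a; rewrite /mxapp (bigD1 a) //= /mx1 eqxx mul1r big1 ?addr0 //.
by move=> b ba; rewrite eq_sym (negbTE ba) mul0r.
Qed.

Lemma mxappM (M N : mx A) v : mxapp (mxmul M N) v = mxapp M (mxapp N v).
Proof.
apply: funext => a; rewrite /mxapp /mxmul.
under eq_bigr do rewrite natr_sum mulr_suml.
rewrite exchange_big; apply: eq_bigr => b _; rewrite mulr_sumr.
by apply: eq_bigr => c _; rewrite natrM mulrA.
Qed.

End NatMatrixAction.

Section NatMatrixBounds.
Variables (R : realType) (A : finType).

Lemma sum_mxapp_le (M : mx A) (v : A -> R) :
  \sum_a mxapp M v a <= (mxnorm M)%:R * alph_max v.
Proof.
rewrite /mxapp /mxnorm natr_sum mulr_suml; apply: ler_sum => a _.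
rewrite natr_sum mulr_suml; apply: ler_sum => b _.
by rewrite ler_wpM2l ?le_alph_max.
Qed.

Lemma sum_mxapp_ge (M : mx A) (v : A -> R) :
  (mxnorm M)%:R * alph_min v <= \sum_a mxapp M v a.
Proof.
rewrite /mxapp /mxnorm natr_sum mulr_suml; apply: ler_sum => a _.
rewrite natr_sum mulr_suml; apply: ler_sum => b _.
by rewrite ler_wpM2l ?alph_min_le.
Qed.

Lemma mxnorm_gt0 (M : mx A) (v : A -> R) : 0 < \sum_a mxapp M v a -> (0 < mxnorm M)%N.
Proof.
rewrite lt0n; apply: contraTneq => M0.
by rewrite -leNgt (le_trans (sum_mxapp_le M v)) // M0 mul0r.
Qed.

Lemma alph_max_mxapp_le (a0 : A) (M : mx A) (v : A -> R) : (forall b, 0 <= v b) ->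
  alph_max (mxapp M v) <= (mxnorm M)%:R * alph_max v.
Proof.
move=> v_ge0; have [a ->] := alph_max_attained a0 (mxapp M v).
apply: le_trans (_ : (\sum_b M a b)%:R * alph_max v <= _).
  rewrite /mxapp natr_sum mulr_suml; apply: ler_sum => b _.
  by rewrite ler_wpM2l ?le_alph_max.
rewrite ler_wpM2r ?(le_trans (v_ge0 a0) (le_alph_max v a0)) // ler_nat /mxnorm.
by rewrite [X in (_ <= X)%N](bigD1 a) //= leq_addr.
Qed.

End NatMatrixBounds.

Section RauzyVeechStep.
Variables (R : realType) (A : finType).

Definition last_in (D : rvdata R A) (x : A) : Prop :=
  last_letter (rv_p0 D) = Some x \/ last_letter (rv_p1 D) = Some x.

Variant rv_step_spec (D : rvdata R A) : rvdata R A -> option (A * A) -> Prop :=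
  | RVStepTie : rv_step_spec D D None
  | RVStepMove w l D' of rv_len D l < rv_len D w
      & rv_len D' = rv_newlen (rv_len D) w l
      & last_in D' w
      & (forall x, last_in D x -> x = w \/ x = l) : rv_step_spec D D' (Some (w, l)).

Lemma rv_stepP D : rv_step_spec D (rv_step D).1 (rv_step D).2.
Proof.
case: D => q0 q1 len; rewrite /rv_step /last_in /=.
case E0: (last_letter q0) => [a0|]; last exact: RVStepTie.
case E1: (last_letter q1) => [a1|]; last exact: RVStepTie.
have lastE x : last_letter q0 = Some x \/ last_letter q1 = Some x -> x = a0 \/ x = a1.
  by rewrite E0 E1 => -[[]|[]] ->; [left|right].
case: ifP => [a1a0|_]; first by apply: RVStepMove => //; left.
case: ifP => [a0a1|_]; last exact: RVStepTie.
apply: RVStepMove => //=; first by right.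
by move=> x /lastE [|] ->; [right|left].
Qed.

End RauzyVeechStep.

Section RauzyVeechIteration.
Variables (R : realType) (A : finType) (p0 p1 : A -> nat) (lam : A -> R).

Local Notation st := (rv_state p0 p1 lam).
Local Notation wl := (rv_wl p0 p1 lam).
Local Notation lb := (rv_lambda p0 p1 lam).
Local Notation name := (rv_name p0 p1 lam).

Lemma rv_stateS n : st n.+1 = (rv_step (st n)).1.
Proof. by rewrite /rv_state iterS. Qed.

Lemma rv_iterP n : rv_step_spec (st n) (st n.+1) (wl n.+1).
Proof. by rewrite rv_stateS; exact: rv_stepP. Qed.

Lemma rv_lambdaS n a : lb n.+1 a =
  if wl n.+1 is Some (w, l) then (if a == w then lb n w - lb n l else lb n a)
  else lb n a.
Proof.
by rewrite /rv_lambda; case: (rv_iterP n) => // w l D' _ ->.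
Qed.

Lemma rv_wl_lt n w l : wl n.+1 = Some (w, l) -> lb n l < lb n w.
Proof. by rewrite /rv_lambda; case: (rv_iterP n) => // w' l' D' ? _ _ _ [<- <-]. Qed.

Lemma rv_wl_last n w l : wl n.+1 = Some (w, l) ->
  last_in (st n.+1) w /\ (forall x, last_in (st n) x -> x = w \/ x = l).
Proof. by case: (rv_iterP n) => // w' l' D' _ _ lastw lastE [<- <-]. Qed.

Lemma rv_wl_neq n w l : wl n.+1 = Some (w, l) -> w != l.
Proof. by move/rv_wl_lt; apply: contraTneq => ->; rewrite ltxx. Qed.

Lemma rv_lambda_gt0 : (forall a, 0 < lam a) -> forall n a, 0 < lb n a.
Proof.
move=> lam_gt0; elim=> [|n IH] a; first exact: lam_gt0.
rewrite rv_lambdaS; case E: (wl n.+1) => [[w l]|] //.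
by case: eqP => // _; rewrite subr_gt0 (rv_wl_lt E).
Qed.

Lemma rv_lambda_V n : lb n = mxapp (rv_V p0 p1 lam n.+1) (lb n.+1).
Proof.
apply: funext => a; rewrite /mxapp /rv_V.
under eq_bigr do rewrite natrD mulrDl.
rewrite big_split /= -[X in _ = X + _]/(mxapp (@mx1 A) (lb n.+1) a) mxapp1.
rewrite rv_lambdaS; case E: (wl n.+1) => [[w l]|]; last first.
  by rewrite big1 ?addr0 // => b _; rewrite mul0r.
have [->|aw] := eqVneq a w.
  rewrite (bigD1 l) //= eqxx mul1r big1 ?addr0; last first.
    move=> b bl; rewrite (inj_eq (@Some_inj _)) xpair_eqE eqxx.
    by rewrite eq_sym (negbTE bl) mul0r.
  by rewrite rv_lambdaS E eq_sym (negbTE (rv_wl_neq E)) subrK.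
rewrite big1 ?addr0 // => b _.
by rewrite (inj_eq (@Some_inj _)) xpair_eqE eq_sym (negbTE aw) mul0r.
Qed.

Lemma rv_lambda_iter m j :
  lb m = mxapp (mxprod [seq rv_V p0 p1 lam i | i <- iota m.+1 j]) (lb (m + j)).
Proof.
elim: j m => [|j IH] m /=; first by rewrite addn0 mxapp1.
by rewrite mxappM -addSnnS -IH -rv_lambda_V.
Qed.

Lemma rv_state_tie n : wl n.+1 = None -> st n.+1 = st n.
Proof. by case: (rv_iterP n). Qed.

Lemma rv_wl_tie n m : wl n.+1 = None -> (n <= m)%N -> wl m.+1 = None.
Proof.
move=> tie /subnKC <-; elim: (m - n)%N => [|i IH]; first by rewrite addn0.
rewrite addnS; change ((rv_step (st (n + i).+1)).2 = None).
by rewrite rv_state_tie.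
Qed.

Lemma rv_lambda_unnamed b lo hi : (lo <= hi)%N ->
  (forall m, (lo < m <= hi)%N -> name m != Some b) -> lb hi b = lb lo b.
Proof.
move=> /subnKC <-; elim: (hi - lo)%N => [|i IH] unnamed; first by rewrite addn0.
have {}IH : lb (lo + i) b = lb lo b.
  by apply: IH => m /andP[lom mi]; rewrite unnamed // lom addnS ltnW.
rewrite addnS rv_lambdaS; case E: (wl (lo + i).+1) => [[w l]|] //.
have := unnamed (lo + i).+1; rewrite /rv_name E ltnS leq_addr addnS leqnn => /(_ isT).
by rewrite /= (inj_eq (@Some_inj _)) eq_sym => /negbTE ->.
Qed.

Lemma rv_name_wl m b : name m = Some b -> exists l, wl m = Some (b, l).
Proof. by rewrite /rv_name; case: (wl m) => [[w l] [->]|//]; exists l. Qed.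

(* A step is played between the two last letters and its winner stays last; so
   as long as no letter of [S] beats a letter outside [S], some last letter
   stays outside [S]. *)
Lemma rv_wl_cross (S : {set A}) u v x y l1 l2 : (u < v)%N ->
  wl u.+1 = Some (x, l1) -> x \notin S -> wl v.+1 = Some (y, l2) -> y \in S ->
  exists j w l, [/\ (u < j <= v)%N, wl j.+1 = Some (w, l), w \in S & l \notin S].
Proof.
move=> uv wlu xS wlv yS.
case: (pselect (exists j w l, [/\ (u < j <= v)%N, wl j.+1 = Some (w, l), w \in S
  & l \notin S])) => // no_cross; exfalso.
have last_out i : (u < i <= v)%N -> exists2 z, z \notin S & last_in (st i) z.
  elim: i => // i IH; rewrite ltnS => /andP[]; rewrite leq_eqVlt.
  case/predU1P=> [<- _|ui iv].
    by exists x; [|case: (rv_wl_last wlu)].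
  have /IH [z zS lastz] : (u < i <= v)%N by rewrite ui ltnW.
  case E: (wl i.+1) => [[w l]|]; last by exists z; rewrite ?(rv_state_tie E).
  have [lastw /(_ z lastz) [] ez] := rv_wl_last E; subst z; first by exists w.
  have [wS|wS] := boolP (w \in S); last by exists w.
  by case: no_cross; exists i, w, l; rewrite ui ltnW.
have /last_out [z zS lastz] : (u < v <= v)%N by rewrite uv leqnn.
have [_ /(_ z lastz)] := rv_wl_last wlv.
case=> ez; subst z; first by rewrite yS in zS.
by apply: no_cross; exists v, y, l2; rewrite uv leqnn.
Qed.

End RauzyVeechIteration.

Section RowSupport.
Variables (R : realType) (A : finType) (p0 p1 : A -> nat) (lam : A -> R).

Local Notation wl := (rv_wl p0 p1 lam).
Local Notation lb := (rv_lambda p0 p1 lam).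

(* The support of row [al] of V^[s+1] ... V^[t]: right multiplication by
   I + E_(w,l) adds [l] to it exactly when [w] is already there. *)
Fixpoint row_support (s : nat) (al : A) (t : nat) : {set A} :=
  if t is t'.+1 then
    if (t' < s)%N then [set al] else
      let S := row_support s al t' in
      if wl t'.+1 is Some (w, l) then (if w \in S then l |: S else S) else S
  else [set al].

Lemma row_support_start s al : row_support s al s = [set al].
Proof. by case: s => //= s; rewrite ltnSn. Qed.

Lemma row_supportS s al t : (s <= t)%N ->
  row_support s al t \subset row_support s al t.+1.
Proof.
move=> st /=; rewrite ltnNge st /=.
by case: (wl t.+1) => [[w l]|] //; case: ifP => // _; exact: subsetUr.
Qed.

Lemma row_support_mono s al t t' : (s <= t)%N -> (t <= t')%N ->
  row_support s al t \subset row_support s al t'.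
Proof.
move=> st /subnKC <-; elim: (t' - t)%N => [|i IH]; first by rewrite addn0.
by rewrite addnS (subset_trans IH) // row_supportS // (leq_trans st) ?leq_addr.
Qed.

Lemma row_support_loser s al t w l : (s <= t)%N -> wl t.+1 = Some (w, l) ->
  w \in row_support s al t -> l \in row_support s al t.+1.
Proof. by move=> st wlt w_in /=; rewrite ltnNge st /= wlt w_in setU11. Qed.

Lemma row_support_root s al t : (s <= t)%N -> al \in row_support s al t.
Proof.
move=> st; apply: (subsetP (row_support_mono al (leqnn s) st)).
by rewrite row_support_start set11.
Qed.

Lemma sum_row_support_le s al t : (forall n a, 0 <= lb n a) -> (s <= t)%N ->
  \sum_(b in row_support s al t) lb t b <= lb s al.
Proof.
move=> lb_ge0; elim: t => [|t IH] st.
  by move: st; rewrite leqn0 => /eqP ->; rewrite /= big_set1.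
have [ts|st'] := ltnP t s.
  have -> : s = t.+1 by apply/eqP; rewrite eqn_leq st ts.
  by rewrite row_support_start big_set1.
apply: le_trans (IH st'); rewrite /= ltnNge st' /=.
set S := row_support s al t.
case E: (wl t.+1) => [[w l]|]; last first.
  by rewrite (eq_bigr (lb t)) // => b _; rewrite rv_lambdaS E.
have unchanged b : b != w -> lb t.+1 b = lb t b by rewrite rv_lambdaS E => /negbTE ->.
have [wS|wS] := ifP; last first.
  rewrite (eq_bigr (lb t)) // => b bS; rewrite unchanged //.
  by apply: contraFneq wS => <-.
have lw := rv_wl_neq E.
have split_w : \sum_(b in S) lb t b = \sum_(b in S) lb t.+1 b + lb t l.
  rewrite (bigD1 w) //= [in RHS](bigD1 w) //= rv_lambdaS E eqxx.
  rewrite addrAC subrK; congr (_ + _).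
  by apply: eq_bigr => b /andP[_ bw]; rewrite unchanged.
have [lS|lS] := boolP (l \in S).
  by rewrite (setUidPr _) ?sub1set // split_w lerDl lb_ge0.
by rewrite big_setU1 //= split_w addrC unchanged // eq_sym.
Qed.

End RowSupport.

Section Acceleration.
Variables (R : realType) (A : finType) (p0 p1 : A -> nat) (lam : A -> R).

Local Notation name := (rv_name p0 p1 lam).
Local Notation nn := (accel_n p0 p1 lam).
Local Notation lk := (accel_lambda p0 p1 lam).

Definition accel_block_bounded (lo : nat) : Prop :=
  exists ub, forall m, accel_pred p0 p1 lam lo m -> (m <= ub)%N.

Definition rv_names (lo hi : nat) : seq (option A) :=
  [seq name m | m <- iota lo.+1 (hi - lo)].

Lemma accel_next_pred lo : accel_pred p0 p1 lam lo (accel_next p0 p1 lam lo).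
Proof.
rewrite /accel_next; case: pselect => [bnd|_].
  by case: cid => ub ubP; case: ex_maxnP.
by rewrite /accel_pred /ndist leqnn subnn.
Qed.

Lemma accel_next_max lo : accel_block_bounded lo ->
  forall m, accel_pred p0 p1 lam lo m -> (m <= accel_next p0 p1 lam lo)%N.
Proof.
move=> bnd; rewrite /accel_next; case: pselect => [{}bnd|//].
by case: cid => ub ubP; case: ex_maxnP.
Qed.

Lemma accel_n_leS k : (nn k <= nn k.+1)%N.
Proof. by have /andP[] := accel_next_pred (nn k). Qed.

Lemma accel_n_mono k k' : (k <= k')%N -> (nn k <= nn k')%N.
Proof.
move=> /subnKC <-; elim: (k' - k)%N => [|i IH]; first by rewrite addn0.
by rewrite addnS (leq_trans IH (accel_n_leS _)).
Qed.

Lemma accel_n_stuck j : ~ accel_block_bounded (nn j) ->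
  forall k, (j <= k)%N -> nn k = nn j.
Proof.
move=> unbnd; elim=> [|k IH]; first by rewrite leqn0 => /eqP ->.
rewrite leq_eqVlt => /predU1P[<- //|/IH /= ->].
by rewrite /accel_next; case: pselect.
Qed.

Lemma accel_lambda_Z k : lk k = mxapp (accel_Z p0 p1 lam k.+1) (lk k.+1).
Proof.
by rewrite /accel_lambda /accel_Z /= (rv_lambda_iter _ _ _ (nn k) (nn k.+1 - nn k))
  subnKC ?accel_n_leS.
Qed.

Lemma accel_QS k :
  accel_Q p0 p1 lam k.+1 = mxmul (accel_Q p0 p1 lam k) (accel_Z p0 p1 lam k.+1).
Proof.
by rewrite /accel_Q -[k.+1]addn1 iotaD map_cat /= cats1 mxprod_rcons add1n addn1.
Qed.

Lemma accel_lambda_Q k : lam = mxapp (accel_Q p0 p1 lam k) (lk k).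
Proof.
elim: k => [|k IH]; first by rewrite /accel_Q /= mxapp1.
by rewrite accel_QS mxappM -accel_lambda_Z.
Qed.

Lemma accel_block_unnamed k : (0 < #|A|)%N ->
  exists b, forall m, (nn k < m <= nn k.+1)%N -> name m != Some b.
Proof.
move=> A_gt0; have /andP[le_nn few_names] := accel_next_pred (nn k).
case: (pickP (fun b => Some b \notin rv_names (nn k) (nn k.+1))) => [b bP|all_named].
  exists b => m /andP[km mk]; apply: contraNneq bP => <-.
  by apply: map_f; rewrite mem_iota km addSn subnKC.
suff : (#|A| <= ndist p0 p1 lam (nn k) (nn k.+1))%N.
  by move/leq_trans/(_ few_names); case: #|A| A_gt0 => // d _; rewrite subn1 ltnn.
rewrite /ndist cardE -(size_map (@Some A)).
apply: uniq_leq_size; first by rewrite (map_inj_uniq (@Some_inj _)) enum_uniq.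
by move=> _ /mapP[b _ ->]; rewrite mem_undup; apply/negbNE/negbT/all_named.
Qed.

End Acceleration.

Section BoundedBlocks.
Variables (R : realType) (A : finType) (p0 p1 : A -> nat) (lam : A -> R).
Hypothesis A_ge2 : (2 <= #|A|)%N.
Hypothesis bounded : forall j, accel_block_bounded p0 p1 lam (accel_n p0 p1 lam j).

Local Notation wl := (rv_wl p0 p1 lam).
Local Notation lb := (rv_lambda p0 p1 lam).
Local Notation name := (rv_name p0 p1 lam).
Local Notation nn := (accel_n p0 p1 lam).
Local Notation pred_block := (accel_pred p0 p1 lam).
Local Notation supp := (row_support p0 p1 lam).

Lemma accel_n_ltS j : (nn j < nn j.+1)%N.
Proof.
have [ub ubP] := bounded j; apply: (accel_next_max (ex_intro _ ub ubP)).
by rewrite /accel_pred leqnSn /ndist subSnn /= subn_gt0.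
Qed.

Lemma accel_n_ge j : (j <= nn j)%N.
Proof. by elim: j => // j IH; exact: leq_ltn_trans IH (accel_n_ltS j). Qed.

Lemma rv_wl_neq_None m : wl m.+1 <> None.
Proof.
move=> tie; have [ub ubP] := bounded m.+1.
have /ubP : pred_block (nn m.+1) (nn m.+1 + ub).+1.
  rewrite /accel_pred -addnS leq_addr /=.
  apply: leq_trans (_ : 1 <= _)%N; last by rewrite subn_gt0.
  rewrite /ndist (@uniq_leq_size _ _ [:: None]) ?undup_uniq // => o.
  rewrite mem_undup => /mapP[[|i]]; rewrite mem_iota // => /andP[mi _] ->.
  by rewrite inE /rv_name (rv_wl_tie tie) //; have /= := accel_n_ge m.+1; lia.
by rewrite -addnS; lia.
Qed.

Lemma named_within_two_blocks j b :
  exists m, (nn j <= m < nn j.+2)%N /\ name m.+1 = Some b.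
Proof.
set lo := nn j; set hi := nn j.+1.
have [ub ubP] := bounded j.
have not_block : ~~ pred_block lo hi.+1.
  by apply/negP => /(accel_next_max (ex_intro _ ub ubP)); rewrite ltnn.
have lohi : (lo <= hi)%N by exact: accel_n_leS.
have : Some b \in rv_names p0 p1 lam lo hi.+1.
  apply: contraNT not_block => b_unnamed; rewrite /accel_pred ltnW //=.
  apply: leq_trans (_ : size [seq Some c | c <- enum (predC1 b)] <= _)%N.
    apply: uniq_leq_size; first exact: undup_uniq.
    move=> o; rewrite mem_undup => o_in.
    have : o != Some b by apply: contraNneq b_unnamed => <-.
    move: o_in => /mapP[[|i]]; rewrite mem_iota // => _ ->.
    rewrite /rv_name; case E: (wl i.+1) => [[w l]|]; last by case: (rv_wl_neq_None E).
    move=> /= wb; apply: map_f; rewrite mem_enum inE.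
    by apply: contraNneq wb => ->.
  by rewrite size_map -cardE cardC1 subn1.
rewrite /rv_names => /mapP[[|i]]; rewrite mem_iota // => /andP[loi ih] ei.
exists i; split=> //; have := accel_n_ltS j.+1; rewrite -/hi; lia.
Qed.

(* The support grows every four blocks until it is full: a letter [x] outside
   it wins during blocks [4i], [4i+1], and [al] wins during blocks [4i+2],
   [4i+3]; in between, some letter of the support beats one outside it. *)
Lemma card_row_support k al i :
  (minn i.+1 #|A| <= #|supp (nn k) al (nn (k + 4 * i)%N)|)%N.
Proof.
have nn_k j : (nn k <= nn (k + j))%N by apply: accel_n_mono; rewrite leq_addr.
elim: i => [|i IH]; first by rewrite muln0 addn0 row_support_start cards1; lia.
set S := supp (nn k) al (nn (k + 4 * i)%N) in IH.
set T := supp (nn k) al (nn (k + 4 * i.+1)%N).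
have e4 : (k + 4 * i.+1 = (k + 4 * i)%N.+4)%N by lia.
have ST : S \subset T by rewrite row_support_mono // e4 accel_n_mono; lia.
have [S_small|S_big] := ltnP #|S| #|A|; last first.
  by rewrite (leq_trans (geq_minr _ _)) // (leq_trans S_big) ?subset_leq_card.
have [x xS|S_full] := pickP (fun x => x \notin S); last first.
  suff : S = setT by move=> S_full'; rewrite S_full' cardsT ltnn in S_small.
  by apply/setP => x; rewrite in_setT; apply/negbNE/negbT/S_full.
have [u [/andP[lo_u u_hi] /rv_name_wl[l1 wlu]]] :=
  named_within_two_blocks (k + 4 * i)%N x.
have [v [/andP[lo_v v_hi] /rv_name_wl[l2 wlv]]] :=
  named_within_two_blocks (k + 4 * i)%N.+2 al.
have alS : al \in S by rewrite row_support_root.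
have [j [w [l [/andP[uj jv] wlj wS lS]]]] :=
  rv_wl_cross (leq_trans u_hi lo_v) wlu xS wlv alS.
have nn_u : (nn k <= u)%N by apply: leq_trans lo_u; exact: nn_k.
have S_j : S \subset supp (nn k) al j.
  by rewrite row_support_mono ?nn_k // (leq_trans lo_u) // ltnW.
have l_in : l \in supp (nn k) al j.+1.
  by apply: row_support_loser wlj (subsetP S_j w wS); rewrite (leq_trans nn_u) // ltnW.
have j_T : supp (nn k) al j.+1 \subset T.
  by rewrite row_support_mono //; [lia | rewrite e4; lia].
have : S \proper T by apply/properP; split=> //; exists l => //; exact: (subsetP j_T).
by move/proper_card; lia.
Qed.

Lemma sum_rv_lambda_le_accel : (forall n a, 0 <= lb n a) -> forall k al,
  \sum_b lb (nn (k + 4 * #|A|)%N) b <= accel_lambda p0 p1 lam k al.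
Proof.
move=> lb_ge0 k al.
have nn_k : (nn k <= nn (k + 4 * #|A|))%N by rewrite accel_n_mono ?leq_addr.
have full : supp (nn k) al (nn (k + 4 * #|A|)%N) = setT.
  apply/eqP; rewrite eqEcard subsetT cardsT.
  by have := card_row_support k al #|A|; rewrite (minn_idPr _).
have := sum_row_support_le al lb_ge0 nn_k; rewrite full.
by under eq_bigl do rewrite in_setT.
Qed.

End BoundedBlocks.

Section AccelerationEstimates.
Variables (R : realType) (A : finType) (p0 p1 : A -> nat) (lam : A -> R).
Hypothesis lam_gt0 : forall a, 0 < lam a.
Variable a0 : A.

Local Notation Nq k := ((mxnorm (accel_Q p0 p1 lam k))%:R : R).
Local Notation Zq k := ((mxnorm (accel_Z p0 p1 lam k))%:R : R).
Local Notation lk k := (accel_lambda p0 p1 lam k).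
Local Notation mxk k := (alph_max (accel_lambda p0 p1 lam k)).
Local Notation mnk k := (alph_min (accel_lambda p0 p1 lam k)).

Lemma accel_lambda_gt0 k a : 0 < lk k a.
Proof. exact: rv_lambda_gt0. Qed.

Lemma alph_min_accel_lambda_gt0 k : 0 < mnk k.
Proof. by have [a ->] := alph_min_attained a0 (lk k); exact: accel_lambda_gt0. Qed.

Lemma alph_max_accel_lambda_gt0 k : 0 < mxk k.
Proof. exact: lt_le_trans (accel_lambda_gt0 k a0) (le_alph_max _ a0). Qed.

Lemma accel_Q_norm_ge1 k : 1 <= Nq k.
Proof.
rewrite ler1n; apply: (@mxnorm_gt0 _ _ _ (lk k)).
by rewrite -accel_lambda_Q; exact: sumr_gt0 a0 _ lam_gt0.
Qed.

Lemma accel_Q_norm_gt0 k : 0 < Nq k.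
Proof. exact: lt_le_trans ltr01 (accel_Q_norm_ge1 k). Qed.

Lemma accel_Q_norm_powR_ge1 k eta : 0 <= eta -> 1 <= Nq k `^ eta.
Proof.
move=> eta_ge0; apply: le_trans (_ : Nq k `^ 0 <= _); first by rewrite powRr0.
exact: ler_powR (accel_Q_norm_ge1 k) _ _ eta_ge0.
Qed.

Lemma accel_Z_norm_ge1 k : 1 <= Zq k.+1.
Proof.
rewrite ler1n; apply: (@mxnorm_gt0 _ _ _ (lk k.+1)).
by rewrite -accel_lambda_Z; apply: (sumr_gt0 a0) => a; exact: accel_lambda_gt0.
Qed.

Lemma accel_Q_normS_le k : Nq k.+1 <= Nq k * Zq k.+1.
Proof. by rewrite accel_QS -natrM ler_nat mxnormM. Qed.

Lemma alph_max_accel_lambda_le k : mxk k <= Zq k.+1 * mxk k.+1.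
Proof.
rewrite {1}accel_lambda_Z; apply: alph_max_mxapp_le => // b.
exact/ltW/accel_lambda_gt0.
Qed.

Lemma alph_max_accel_lambda_le_prod M k :
  mxk k <= (\prod_(i < M) Zq (k + i)%N.+1) * mxk (k + M)%N.
Proof.
elim: M => [|M IH]; first by rewrite big_ord0 mul1r addn0.
apply: le_trans IH _; rewrite big_ord_recr /= -mulrA addnS.
by rewrite ler_wpM2l ?alph_max_accel_lambda_le // prodr_ge0.
Qed.

Lemma accel_Z_norm_mul_min_le k : Zq k.+1 * mnk k.+1 <= #|A|%:R * mxk k.
Proof.
apply: le_trans (sum_mxapp_ge _ _) _.
by rewrite -accel_lambda_Z sum_le_card_alph_max.
Qed.

(* Some letter names no step of the block, so its length is not changed by it. *)
Lemma alph_min_le_alph_maxS k : mnk k <= mxk k.+1.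
Proof.
have [|b unnamed] := accel_block_unnamed p0 p1 lam k.
  by apply/card_gt0P; exists a0.
apply: le_trans (alph_min_le _ b) (le_trans _ (le_alph_max _ b)).
by rewrite /accel_lambda (rv_lambda_unnamed (accel_n_leS _ _ _ k) unnamed).
Qed.

Lemma accel_lambda_bounds k :
  total_length lam / Nq k <= mxk k /\ mnk k <= total_length lam / Nq k.
Proof.
have N_gt0 := accel_Q_norm_gt0 k.
rewrite ler_pdivrMr // ler_pdivlMr // ![_ * Nq k]mulrC /total_length.
by split; [apply: le_trans _ (sum_mxapp_le _ _)|apply: le_trans (sum_mxapp_ge _ _) _];
  rewrite -accel_lambda_Q.
Qed.

Lemma alph_max_le_alph_min_after_blocks : (2 <= #|A|)%N ->
  (forall j, accel_block_bounded p0 p1 lam (accel_n p0 p1 lam j)) ->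
  forall k, mxk (k + 4 * #|A|)%N <= mnk k.
Proof.
move=> A_ge2 bounded k; have [al ->] := alph_min_attained a0 (lk k).
have lb_ge0 n a : 0 <= rv_lambda p0 p1 lam n a by exact/ltW/rv_lambda_gt0.
apply: le_trans (sum_rv_lambda_le_accel A_ge2 bounded lb_ge0 k al).
have [b ->] := alph_max_attained a0 (lk (k + 4 * #|A|)%N).
by rewrite /accel_lambda (bigD1 b) //= lerDl sumr_ge0.
Qed.

End AccelerationEstimates.

Section LengthBalance.
Variables (R : realType) (A : finType) (p0 p1 : A -> nat) (lam : A -> R).
Hypothesis lam_gt0 : forall a, 0 < lam a.
Variable a0 : A.

Local Notation Nq k := ((mxnorm (accel_Q p0 p1 lam k))%:R : R).
Local Notation Zq k := ((mxnorm (accel_Z p0 p1 lam k))%:R : R).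
Local Notation mxk k := (alph_max (accel_lambda p0 p1 lam k)).
Local Notation mnk k := (alph_min (accel_lambda p0 p1 lam k)).

Definition lengths_balanced : Prop :=
  forall eps : R, 0 < eps -> exists C : R, 0 < C /\
    forall k : nat, mxk k <= C * mnk k * Nq k `^ eps.

Lemma accel_Z_norm_le_of_balanced d C : 0 <= C ->
  (forall k, mxk k <= C * mnk k * Nq k `^ d) ->
  forall k, Zq k.+1 <= #|A|%:R * C ^+ 2 * Nq k `^ d * Nq k.+1 `^ d.
Proof.
move=> C_ge0 balC k.
rewrite -(ler_pM2r (alph_min_accel_lambda_gt0 p0 p1 lam_gt0 a0 k.+1)).
apply: le_trans (accel_Z_norm_mul_min_le p0 p1 lam k) _.
have minS := le_trans (alph_min_le_alph_maxS p0 p1 lam a0 k) (balC k.+1).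
apply: le_trans (ler_wpM2l (ler0n _ _) (balC k)) _.
rewrite (_ : _ * mnk k.+1 =
  #|A|%:R * (C * (C * mnk k.+1 * Nq k.+1 `^ d) * Nq k `^ d)); last by ring.
by rewrite ler_wpM2l // ler_wpM2r ?powR_ge0 // ler_wpM2l.
Qed.

Lemma condition_a_of_lengths_balanced : lengths_balanced -> condition_a p0 p1 lam.
Proof.
move=> bal eps eps_gt0.
pose d := eps / (2 + eps).
have d_gt0 : 0 < d by rewrite divr_gt0 //; lra.
have d_lt1 : d < 1 by rewrite ltr_pdivrMr; lra.
have [C [C_gt0 balC]] := bal d d_gt0.
have [K K_gt0 ZK] : exists2 K, 0 < K &
    forall k, Zq k.+1 <= K * (Nq k `^ d * Nq k.+1 `^ d).
  exists (#|A|%:R * C ^+ 2) => [|k].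
    by rewrite mulr_gt0 ?exprn_gt0 // ltr0n; apply/card_gt0P; exists a0.
  by rewrite mulrA; exact: accel_Z_norm_le_of_balanced (ltW C_gt0) balC k.
exists (K `^ (1 - d)^-1); split=> [|k]; first by rewrite powR_gt0.
have N_gt0 := accel_Q_norm_gt0 p0 p1 lam_gt0 a0 k.
have Z_gt0 := lt_le_trans ltr01 (accel_Z_norm_ge1 p0 p1 lam_gt0 a0 k).
have Z_self : Zq k.+1 <= (K * Nq k `^ (d + d)) * Zq k.+1 `^ d.
  apply: le_trans (ZK k) _.
  rewrite powRD ?(gt_eqF N_gt0) ?implybT // -!mulrA ler_wpM2l ?(ltW K_gt0) //.
  rewrite ler_wpM2l ?powR_ge0 // -powRM ?(ltW N_gt0) ?(ltW Z_gt0) //.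
  by apply: ge0_ler_powR (accel_Q_normS_le p0 p1 lam k);
    rewrite ?(ltW d_gt0) ?nnegrE ?mulr_ge0 ?ler0n.
apply: le_trans (le_powR_of_le_mul_powR Z_gt0 d_lt1 Z_self) _.
rewrite powRM ?powR_ge0 ?(ltW K_gt0) // -powRrM.
by rewrite (_ : (d + d) * (1 - d)^-1 = eps) //; rewrite /d; field; lra.
Qed.

(* The acceleration is stuck from block [j] on, so [lam^(k)] only takes the
   values [lam^(0)], ..., [lam^(j)]. *)
Lemma lengths_balanced_of_unbounded_block j :
  ~ accel_block_bounded p0 p1 lam (accel_n p0 p1 lam j) -> lengths_balanced.
Proof.
move=> unbounded eps eps_gt0.
have ratio_gt0 i : 0 < mxk i / mnk i.
  by rewrite divr_gt0 ?alph_max_accel_lambda_gt0 ?alph_min_accel_lambda_gt0.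
exists (\sum_(i < j.+1) mxk i / mnk i); split=> [|k]; first exact: sumr_gt0 ord0 _ _.
have [i [ij ->]] :
    exists i, (i <= j)%N /\ accel_lambda p0 p1 lam k = accel_lambda p0 p1 lam i.
  have [kj|/ltnW jk] := leqP k j; first by exists k.
  by exists j; rewrite /accel_lambda (accel_n_stuck unbounded jk).
have mn_gt0 := alph_min_accel_lambda_gt0 p0 p1 lam_gt0 a0 i.
apply: le_trans (_ : (\sum_(i < j.+1) mxk i / mnk i) * mnk i <= _); last first.
  by rewrite ler_pMr ?mulr_gt0 ?(sumr_gt0 ord0) ?accel_Q_norm_powR_ge1 ?(ltW eps_gt0).
rewrite -ler_pdivrMr // (bigD1 (Ordinal (ij : (i < j.+1)%N))) //= lerDl.
by apply: sumr_ge0 => i' _; exact: ltW.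
Qed.

End LengthBalance.

Section ConditionA.
Variables (R : realType) (A : finType) (p0 p1 : A -> nat) (lam : A -> R).
Hypothesis lam_gt0 : forall a, 0 < lam a.
Variable a0 : A.
Hypothesis cond_a : condition_a p0 p1 lam.

Local Notation Nq k := ((mxnorm (accel_Q p0 p1 lam k))%:R : R).
Local Notation Zq k := ((mxnorm (accel_Z p0 p1 lam k))%:R : R).

Lemma accel_Z_norm_shift_le_of i r : 0 < r ->
  (exists C, 0 < C /\ forall k, Nq (k + i)%N <= C * Nq k `^ r) ->
  forall eta, 0 < eta ->
  exists C, 0 < C /\ forall k, Zq (k + i)%N.+1 <= C * Nq k `^ eta.
Proof.
move=> r_gt0 [C1 [C1_gt0 shiftQ]] eta eta_gt0.
have er_gt0 : 0 < eta / r by rewrite divr_gt0.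
have [C0 [C0_gt0 condC]] := cond_a er_gt0.
exists (C0 * C1 `^ (eta / r)); split=> [|k]; first by rewrite mulr_gt0 ?powR_gt0.
apply: le_trans (condC (k + i)%N) _; rewrite -mulrA ler_wpM2l ?(ltW C0_gt0) //.
apply: (@le_trans _ _ ((C1 * Nq k `^ r) `^ (eta / r))).
  by apply: ge0_ler_powR (shiftQ k);
    rewrite ?(ltW er_gt0) ?nnegrE ?mulr_ge0 ?powR_ge0 ?ler0n ?(ltW C1_gt0).
by rewrite powRM ?powR_ge0 ?(ltW C1_gt0) // -powRrM mulrCA divff ?mulr1 ?gt_eqF.
Qed.

Lemma accel_Q_norm_shift_le i eta : 0 < eta ->
  exists C, 0 < C /\ forall k, Nq (k + i)%N <= C * Nq k `^ (1 + eta).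
Proof.
elim: i eta => [|i IH] eta eta_gt0.
  exists 1; split=> // k; rewrite addn0 mul1r.
  rewrite -[X in X <= _](powRr1 (ler0n _ _)) ler_powR ?accel_Q_norm_ge1 //.
  by rewrite lerDl (ltW eta_gt0).
have eta2_gt0 : 0 < eta / 2 by rewrite divr_gt0.
have shiftQ := IH _ eta2_gt0; have [C1 [C1_gt0 shiftQ1]] := shiftQ.
have [|C2 [C2_gt0 shiftZ]] := accel_Z_norm_shift_le_of _ shiftQ eta2_gt0; first lra.
exists (C1 * C2); split=> [|k]; first exact: mulr_gt0.
rewrite addnS; apply: le_trans (accel_Q_normS_le _ _ _ _) _.
apply: le_trans (ler_pM (ler0n _ _) (ler0n _ _) (shiftQ1 k) (shiftZ k)) _.
rewrite (_ : 1 + eta = (1 + eta / 2) + eta / 2); last lra.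
have N_gt0 := accel_Q_norm_gt0 p0 p1 lam_gt0 a0 k.
by rewrite [in X in _ <= X]powRD ?(gt_eqF N_gt0) ?implybT // mulrACA.
Qed.

Lemma prod_accel_Z_norm_le M eta : 0 < eta ->
  exists C, 0 < C /\ forall k, \prod_(i < M) Zq (k + i)%N.+1 <= C * Nq k `^ eta.
Proof.
elim: M eta => [|M IH] eta eta_gt0.
  exists 1; split=> // k.
  by rewrite big_ord0 mul1r accel_Q_norm_powR_ge1 ?(ltW eta_gt0).
have eta2_gt0 : 0 < eta / 2 by rewrite divr_gt0.
have [C1 [C1_gt0 prodZ]] := IH _ eta2_gt0.
have [|C2 [C2_gt0 shiftZ]] :=
  accel_Z_norm_shift_le_of _ (accel_Q_norm_shift_le M ltr01) eta2_gt0; first lra.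
exists (C1 * C2); split=> [|k]; first exact: mulr_gt0.
rewrite big_ord_recr /=.
apply: le_trans (ler_pM _ (ler0n _ _) (prodZ k) (shiftZ k)) _.
  by apply: prodr_ge0 => i _; exact: ler0n.
have N_gt0 := accel_Q_norm_gt0 p0 p1 lam_gt0 a0 k.
by rewrite -mulrACA -powRD ?(gt_eqF N_gt0) ?implybT // -splitr.
Qed.

Lemma lengths_balanced_of_condition_a : (2 <= #|A|)%N -> lengths_balanced p0 p1 lam.
Proof.
move=> A_ge2 eps eps_gt0.
case: (pselect (forall j, accel_block_bounded p0 p1 lam (accel_n p0 p1 lam j)))
  => [bounded|/existsNP [j unbounded]]; last first.
  exact: lengths_balanced_of_unbounded_block lam_gt0 a0 j unbounded eps eps_gt0.
have [C [C_gt0 prodZ]] := prod_accel_Z_norm_le (4 * #|A|)%N eps_gt0.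
exists C; split=> // k.
apply: le_trans (alph_max_accel_lambda_le_prod p0 p1 lam_gt0 a0 (4 * #|A|)%N k) _.
rewrite (mulrC C) -mulrA [X in X <= _]mulrC.
apply: ler_pM; last exact: prodZ.
- exact/ltW/alph_max_accel_lambda_gt0.
- by apply: prodr_ge0 => i _; exact: ler0n.
- exact: alph_max_le_alph_min_after_blocks.
Qed.

End ConditionA.

Theorem mainTheorem4 (R : realType) (A : finType) (p0 p1 : A -> nat) (lam : A -> R) :
  (2 <= #|A|)%N ->
  is_bij_onto p0 -> is_bij_onto p1 -> admissible p0 p1 ->
  (forall a, 0 < lam a) ->
  keane p0 p1 lam ->
  (forall k : nat,
      total_length lam / (mxnorm (accel_Q p0 p1 lam k))%:R
        <= alph_max (accel_lambda p0 p1 lam k) /\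
      alph_min (accel_lambda p0 p1 lam k)
        <= total_length lam / (mxnorm (accel_Q p0 p1 lam k))%:R) /\
  (condition_a p0 p1 lam <->
   forall eps : R, 0 < eps -> exists C : R, 0 < C /\
     forall k : nat,
       alph_max (accel_lambda p0 p1 lam k)
         <= C * alph_min (accel_lambda p0 p1 lam k)
              * ((mxnorm (accel_Q p0 p1 lam k))%:R `^ eps)).
Proof.
move=> A_ge2 _ _ _ lam_gt0 _.
have [a0 _] := card_gt0P (ltnW A_ge2).
split=> [k|]; first exact: accel_lambda_bounds lam_gt0 a0 k.
split=> [cond_a|]; first exact: lengths_balanced_of_condition_a lam_gt0 a0 cond_a A_ge2.
exact: condition_a_of_lengths_balanced lam_gt0 a0.
Qed.
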